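(* Let $n\ge1$, let $F$ be a permutation of $\mathbb{F}_{2^n}$ with Carlitz rank $m$, and let $c\in\mathbb{F}_{2^n}$ with $c\neq1$. Then ${}_c\Delta_F\le m+2$.
   Context: Every permutation $F$ of $\mathbb{F}_{2^n}$ can be written, for some $m\ge0$ and $a_0,\dots,a_{m+1}\in\mathbb{F}_{2^n}$ with $a_0,a_2,\dots,a_m\neq0$, as $F(x)=(\cdots((a_0x+a_1)^{2^n-2}+a_2)^{2^n-2}\cdots+a_m)^{2^n-2}+a_{m+1}$. The Carlitz rank of $F$ is the least such $m$. For $F:\mathbb{F}_{2^n}\to\mathbb{F}_{2^n}$ and $c\in\mathbb{F}_{2^n}$, ${}_cD_aF(x)=F(x+a)+cF(x)$; ${}_c\Delta_F(a,b)$ is the number of $x\in\mathbb{F}_{2^n}$ with ${}_cD_aF(x)=b$; and ${}_c\Delta_F=\max\{{}_c\Delta_F(a,b): a,b\in\mathbb{F}_{2^n},\ a\neq 0 \text{ if } c=1\}$. *)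

From mathcomp Require Import all_boot all_order all_algebra all_field.
Set Implicit Arguments. Unset Strict Implicit. Unset Printing Implicit Defensive.
Import GRing.Theory.
Local Open Scope ring_scope.

(* So carlitz_eval n a m x
     = (...((a_0 x + a_1)^(2^n-2) + a_2)^(2^n-2) ... + a_m)^(2^n-2) + a_(m+1). *)
Fixpoint carlitz_eval (F : fieldType) (n : nat) (a : nat -> F) (k : nat) (x : F) : F :=
  match k with
  | 0 => a 0%N * x + a 1%N
  | k'.+1 => (carlitz_eval n a k' x) ^+ (2 ^ n - 2) + a k'.+2
  end.

Definition carlitz_repr (F : fieldType) (n : nat) (P : F -> F) (m : nat) : Prop :=
  exists a : nat -> F,
    a 0%N != 0 /\ (forall i, (2 <= i <= m)%N -> a i != 0) /\
    forall x, P x = carlitz_eval n a m x.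

Definition carlitz_rank_eq (F : fieldType) (n : nat) (P : F -> F) (m : nat) : Prop :=
  carlitz_repr n P m /\ forall m', (m' < m)%N -> ~ carlitz_repr n P m'.

Definition c_Delta (F : finFieldType) (P : F -> F) (c a b : F) : nat :=
  #|[set x : F | P (x + a) + c * P x == b]|.

Definition c_uniformity (F : finFieldType) (P : F -> F) (c : F) : nat :=
  \max_(ab : F * F | (c != 1) || (ab.1 != 0)) c_Delta P c ab.1 ab.2.

From mathcomp Require Import all_boot all_order all_algebra all_field.
From mathcomp Require Import ring.
Import GRing.Theory.
Local Open Scope ring_scope.
Set Implicit Arguments. Unset Strict Implicit.

(* Off the at most m points where an intermediate stage of its Carlitz form
   vanishes, F is a single Moebius map x |-> (al x + be) / (ga x + de) with
   nonzero determinant.  A solution x of F(x + a) + c F(x) = b such that x and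
   x + a both avoid these points is a root of the quadratic obtained by
   clearing denominators; that quadratic is nonzero when c <> 0 and a <> 0
   (evaluate it at the pole -de/ga, or read off its linear coefficient when
   ga = 0), so there are at most two such x.  In characteristic 2 with c <> 1
   and a <> 0, x and x + a are never both solutions, hence sending each
   remaining solution to whichever of x, x + a is exceptional is injective,
   and there are at most m of them.  For c = 0 or a = 0 the permutation F
   allows at most one solution. *)

Record moebius (R : Type) :=
  Moebius { mob_a : R; mob_b : R; mob_c : R; mob_d : R }.

Definition mob_num (R : pzRingType) (M : moebius R) (x : R) :=
  mob_a M * x + mob_b M.
Definition mob_den (R : pzRingType) (M : moebius R) (x : R) :=
  mob_c M * x + mob_d M.
Definition mob_app (R : unitRingType) (M : moebius R) (x : R) :=
  mob_num M x / mob_den M x.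
Definition mob_det (R : pzRingType) (M : moebius R) :=
  mob_a M * mob_d M - mob_b M * mob_c M.

Lemma expf_card_subn2 (F : finFieldType) (x : F) :
  (2 < #|F|)%N -> x ^+ (#|F| - 2) = x^-1.
Proof.
move=> F_gt2; have [->|x_neq0] := eqVneq x 0.
  by rewrite invr0 expr0n subn_eq0 leqNgt F_gt2.
apply: (mulIf x_neq0); rewrite mulVf //; apply: (mulIf x_neq0).
by rewrite mul1r -!exprSr -addn2 subnK ?expf_card // ltnW.
Qed.

Lemma card_quadratic_roots (F : finFieldType) (q2 q1 q0 : F) (S : {set F}) :
  ~~ [&& q2 == 0, q1 == 0 & q0 == 0] ->
  {in S, forall x, q2 * x ^+ 2 + q1 * x + q0 = 0} -> (#|S| <= 2)%N.
Proof.
move=> q_neq0 S_roots; pose p := Poly [:: q0; q1; q2].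
have p_neq0 : p != 0.
  apply: contra q_neq0 => /eqP p0.
  have := coef_Poly [:: q0; q1; q2]; rewrite -/p p0 => coefs.
  move: (coefs 0%N) (coefs 1%N) (coefs 2%N); rewrite !coef0 /= => <- <- <-.
  by rewrite eqxx.
have S_p : all (root p) (enum S).
  apply/allP => x; rewrite mem_enum => /S_roots.
  by rewrite /root /p horner_Poly /= mul0r add0r mulrDl -mulrA -expr2 => <-.
rewrite cardE -ltnS; apply: leq_trans (size_Poly [:: q0; q1; q2]).
exact: max_poly_roots p_neq0 S_p (enum_uniq S).
Qed.

Lemma card_moebius_c_diff (F : finFieldType) (M : moebius F) (c s b : F) :
  mob_det M != 0 -> c != 0 -> 1 + c != 0 -> s != 0 ->
  (#|[set x | [&& mob_den M x != 0, mob_den M (x + s) != 0 &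
      mob_app M (x + s) + c * mob_app M x == b]%R]| <= 2)%N.
Proof.
case: M => al be ga de; rewrite /mob_det /mob_app /mob_num /mob_den /=.
move=> det_neq0 c_neq0 c1_neq0 s_neq0.
pose q2 := al * ga + c * al * ga - b * ga * ga.
pose q1 := al * de + (al * s + be) * ga + c * (al * (ga * s + de) + be * ga)
           - b * (ga * de + (ga * s + de) * ga).
pose q0 := (al * s + be) * de + c * be * (ga * s + de) - b * (ga * s + de) * de.
have Q_eq x : q2 * x ^+ 2 + q1 * x + q0 =
    (al * (x + s) + be) * (ga * x + de) + c * (al * x + be) * (ga * (x + s) + de)
    - b * (ga * x + de) * (ga * (x + s) + de).
  by rewrite /q2 /q1 /q0; ring.
apply: (card_quadratic_roots (q2 := q2) (q1 := q1) (q0 := q0)).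
  have [ga0|ga_neq0] := eqVneq ga 0.
    have : al * de != 0 by move: det_neq0; rewrite ga0 mulr0 subr0.
    have -> : q1 = al * de * (1 + c) by rewrite /q1 ga0; ring.
    by move=> ad_neq0; rewrite mulf_eq0 (negbTE ad_neq0) (negbTE c1_neq0) andbF.
  apply/negP => /and3P[/eqP q2_0 /eqP q1_0 /eqP q0_0].
  have := Q_eq (- de / ga); rewrite q2_0 q1_0 q0_0 !mul0r !add0r.
  have -> : (al * (- de / ga + s) + be) * (ga * (- de / ga) + de) +
      c * (al * (- de / ga) + be) * (ga * (- de / ga + s) + de) -
      b * (ga * (- de / ga) + de) * (ga * (- de / ga + s) + de) =
      - (c * (al * de - be * ga) * s) by field.
  by move/esym/eqP; apply/negP; rewrite oppr_eq0 !mulf_neq0.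
move=> x; rewrite inE => /and3P[Dx_neq0 Dxs_neq0 /eqP eq_b]; rewrite Q_eq.
have -> : (al * (x + s) + be) * (ga * x + de) +
    c * (al * x + be) * (ga * (x + s) + de) -
    b * (ga * x + de) * (ga * (x + s) + de) =
    (ga * x + de) * (ga * (x + s) + de) *
    ((al * (x + s) + be) / (ga * (x + s) + de) +
     c * ((al * x + be) / (ga * x + de)) - b).
  by field; rewrite Dx_neq0 Dxs_neq0.
by rewrite eq_b subrr mulr0.
Qed.

Lemma leq_card_shift_free (V : finZmodType) (S O : {set V}) (s : V) :
  {in S, forall x, x + s \notin S} ->
  (#|S :&: (O :|: [set x | (x + s)%R \in O])| <= #|O|)%N.
Proof.
move=> S_free; pose g x := if x \in O then x else x + s.
have g_inj : {in S :&: (O :|: [set x | x + s \in O]) &, injective g}.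
  move=> u v /setIP[uS _] /setIP[vS _]; rewrite /g.
  case: ifP => _; case: ifP => _ //; last exact: addIr.
    by move=> u_vs; move: (S_free v vS); rewrite -u_vs uS.
  by move=> us_v; move: (S_free u uS); rewrite us_v vS.
rewrite -(card_in_imset g_inj); apply/subset_leq_card/subsetP => y.
case/imsetP => x /setIP[_ /setUP[xO | xsO]] ->; rewrite /g ?xO //.
by move: xsO; rewrite inE; case: ifP.
Qed.

Lemma c_diff_shift_free (F : fieldType) (P : F -> F) (c s b x : F) :
  2%N \in [pchar F] -> injective P -> c != 1 -> s != 0 ->
  P (x + s) + c * P x = b -> P (x + s + s) + c * P (x + s) != b.
Proof.
move=> charF2 P_inj c_neq1 s_neq0 eq_x; rewrite (addrK_pchar2 charF2).
apply/eqP => eq_xs.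
have : (1 - c) * (P (x + s) - P x) = 0.
  transitivity ((P (x + s) + c * P x) - (P x + c * P (x + s))); first by ring.
  by rewrite eq_x eq_xs subrr.
move/eqP; rewrite mulf_eq0 subr_eq0 eq_sym (negbTE c_neq1) subr_eq0 /=.
move/eqP/P_inj; rewrite -[X in _ = X]addr0 => /addrI s0.
by rewrite s0 eqxx in s_neq0.
Qed.

Lemma c_Delta_le1 (F : finFieldType) (P : F -> F) (c s b : F) :
  injective (fun x => P (x + s) + c * P x) -> (c_Delta P c s b <= 1)%N.
Proof.
by move=> f_inj; apply/card_le1_eqP => x y; rewrite !inE => /eqP fx /eqP fy;
  apply: f_inj; rewrite fx fy.
Qed.

(* [y |-> y^-1 + t] sends [N / D] to [(D + t N) / N]. *)
Fixpoint carlitz_moebius (R : pzRingType) (a : nat -> R) (k : nat) : moebius R :=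
  if k is k'.+1 then
    let M := carlitz_moebius a k' in
    Moebius (mob_c M + a k'.+2 * mob_a M) (mob_d M + a k'.+2 * mob_b M)
            (mob_a M) (mob_b M)
  else Moebius (a 0%N) (a 1%N) 0 1.

Lemma mob_det_carlitz_moebius (R : comPzRingType) (a : nat -> R) (k : nat) :
  mob_det (carlitz_moebius a k) = (-1) ^+ k * a 0%N.
Proof.
elim: k => [|k IH]; first by rewrite /mob_det /= mulr1 mulr0 subr0 mul1r.
by rewrite exprS -mulrA -IH /mob_det /=; ring.
Qed.

Section CarlitzForm.

Variables (F : fieldType) (n : nat) (a : nat -> F).
Hypothesis a0_neq0 : a 0%N != 0.
Hypothesis pow_inv : forall x : F, x ^+ (2 ^ n - 2) = x^-1.

Lemma carlitz_evalS k x :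
  carlitz_eval n a k.+1 x = (carlitz_eval n a k x)^-1 + a k.+2.
Proof. by rewrite /= pow_inv. Qed.

Lemma carlitz_eval_inj k : injective (carlitz_eval n a k).
Proof.
elim: k => [|k IH] x y; first by move=> /= /addIr/(mulfI a0_neq0).
by rewrite !carlitz_evalS => /addIr/invr_inj/IH.
Qed.

Lemma carlitz_eval_moebius k x :
  (forall j, (j < k)%N -> carlitz_eval n a j x != 0) ->
  mob_den (carlitz_moebius a k) x != 0 /\
  carlitz_eval n a k x = mob_app (carlitz_moebius a k) x.
Proof.
elim: k => [|k IH] stages_neq0.
  by rewrite /mob_app /mob_den /mob_num /= mul0r add0r oner_neq0 divr1.
have [D_neq0 eval_k] := IH (fun j jk => stages_neq0 j (ltnW jk)).
have N_neq0 : mob_num (carlitz_moebius a k) x != 0.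
  apply: contraNneq (stages_neq0 k (ltnSn k)) => N0.
  by rewrite eval_k /mob_app N0 mul0r.
split => //; rewrite carlitz_evalS eval_k /mob_app invf_div.
move: D_neq0 N_neq0; rewrite /mob_num /mob_den /= => D_neq0 N_neq0.
by field; rewrite N_neq0.
Qed.

End CarlitzForm.

Definition carlitz_poles (F : finFieldType) (n : nat) (a : nat -> F) (m : nat) :
  {set F} := \bigcup_(j < m) [set x | carlitz_eval n a j x == 0].

Lemma notin_carlitz_poles (F : finFieldType) (n : nat) (a : nat -> F) m x :
  x \notin carlitz_poles n a m ->
  forall j, (j < m)%N -> carlitz_eval n a j x != 0.
Proof.
move=> x_notin j jm; apply: contra x_notin => stage0.
by apply/bigcupP; exists (Ordinal jm); rewrite ?inE.
Qed.

Lemma card_carlitz_poles (F : finFieldType) (n : nat) (a : nat -> F) m :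
  a 0%N != 0 -> (forall x : F, x ^+ (2 ^ n - 2) = x^-1) ->
  (#|carlitz_poles n a m| <= m)%N.
Proof.
move=> a0_neq0 pow_inv; elim: m => [|m IH].
  by rewrite /carlitz_poles big_ord0 cards0.
rewrite /carlitz_poles big_ord_recr /= -addn1.
apply: leq_trans (leq_card_setU _ _) (leq_add IH _).
apply/card_le1_eqP => x y; rewrite !inE => /eqP stage_x /eqP stage_y.
by apply: (carlitz_eval_inj a0_neq0 pow_inv (k := m)); rewrite stage_x stage_y.
Qed.

Lemma pchar2_addr1_eq0 (F : fieldType) (c : F) :
  2%N \in [pchar F] -> (1 + c == 0) = (c == 1).
Proof. by move=> charF2; rewrite addrC addr_eq0 (oppr_pchar2 charF2). Qed.

Lemma c_Delta_carlitz (F : finFieldType) (n m : nat) (a : nat -> F) (P : F -> F)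
    (c s b : F) :
  2%N \in [pchar F] -> a 0%N != 0 -> (forall x : F, x ^+ (2 ^ n - 2) = x^-1) ->
  P =1 carlitz_eval n a m -> c != 0 -> c != 1 -> s != 0 ->
  (c_Delta P c s b <= m + 2)%N.
Proof.
move=> charF2 a0_neq0 pow_inv P_eq c_neq0 c_neq1 s_neq0.
have P_inj : injective P.
  by move=> x y; rewrite !P_eq; apply: (carlitz_eval_inj a0_neq0 pow_inv).
have c1_neq0 : 1 + c != 0 by rewrite pchar2_addr1_eq0.
pose O := carlitz_poles n a m.
rewrite /c_Delta -(cardsID (O :|: [set x | x + s \in O])); apply: leq_add.
  apply: leq_trans (card_carlitz_poles m a0_neq0 pow_inv).
  apply: leq_card_shift_free => x; rewrite !inE => /eqP sol_x.
  exact: c_diff_shift_free.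
apply: leq_trans (card_moebius_c_diff (M := carlitz_moebius a m) b _
  c_neq0 c1_neq0 s_neq0); last first.
  by rewrite mob_det_carlitz_moebius mulf_neq0 ?signr_eq0.
apply/subset_leq_card/subsetP => x; rewrite !inE negb_or.
case/andP => /andP[x_notin xs_notin] /eqP sol_x.
have [Dx_neq0 eval_x] :=
  carlitz_eval_moebius pow_inv (notin_carlitz_poles x_notin).
have [Dxs_neq0 eval_xs] :=
  carlitz_eval_moebius pow_inv (notin_carlitz_poles xs_notin).
by rewrite Dx_neq0 Dxs_neq0 -eval_x -eval_xs -!P_eq sol_x eqxx.
Qed.

Theorem mainTheorem5 (F : finFieldType) (n : nat) (hn : (1 <= n)%N)
  (hcard : #|F| = (2 ^ n)%N) (P : F -> F) (hperm : bijective P) (m : nat)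
  (hrank : carlitz_rank_eq n P m) (c : F) (hc : c != 1) :
  (c_uniformity P c <= m + 2)%N.
Proof.
case: hrank => -[a [a0_neq0 [_ P_eq]]] _.
have P_inj := bij_inj hperm.
have charF2 : 2%N \in [pchar F] by apply: card_finPcharP hcard _.
apply/bigmax_leqP => -[s b] _ /=.
have [-> | c_neq0] := eqVneq c 0.
  apply: (@leq_trans 1); last by rewrite addn2.
  by apply: c_Delta_le1 => x y /=; rewrite !mul0r !addr0 => /P_inj/addIr.
have [-> | s_neq0] := eqVneq s 0.
  have c1_neq0 : 1 + c != 0 by rewrite pchar2_addr1_eq0.
  apply: (@leq_trans 1); last by rewrite addn2.
  apply: c_Delta_le1 => x y /=.
  rewrite !addr0 -{1}[P x]mul1r -{1}[P y]mul1r -!mulrDl.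
  by move/(mulfI c1_neq0)/P_inj.
apply: (c_Delta_carlitz (a := a)) => // x.
rewrite -hcard expf_card_subn2 //; apply/card_gt2P; exists 0, 1, c.
by rewrite !inE eq_sym oner_neq0 eq_sym hc c_neq0.
Qed.
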